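(* Let $\delta\in[0,1/2]$ satisfy $H(\delta)<1/3$. Then there exist arbitrarily long binary linear $3$-CIS codes of rate $1/3$ with relative minimum distance at least $\delta$; more precisely, for all sufficiently large $k$ there is a binary linear $3$-CIS $[3k,k]$ code of minimum distance at least $3\delta k$.
   Context: $H(x)=-x\log_2x-(1-x)\log_2(1-x)$ is the binary entropy function. A binary linear $[3k,k]$ code is $3$-CIS if its coordinate set can be partitioned into $3$ pairwise disjoint information sets, an information set being a set of $k$ coordinates whose columns in a generator matrix are linearly independent. *)

From Stdlib Require Import Reals.
From mathcomp Require Import all_boot all_order all_algebra.
Set Implicit Arguments. Unset Strict Implicit. Unset Printing Implicit Defensive.
Import GRing.Theory.

(* binary logarithm and binary entropy function (0 log 0 = 0 automatically,
   since 0 * ln 0 = 0 regardless of the value of ln 0) *)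
Local Open Scope R_scope.
Definition log2 (x : R) : R := ln x / ln 2.
Definition Hbin (x : R) : R := - x * log2 x - (1 - x) * log2 (1 - x).
Local Close Scope R_scope.

(* A binary linear [n,k] code is given by a generator matrix G : 'M['F_2]_(k,n)
   of full row rank k; the code is the row space of G. *)

Definition wt n (c : 'rV['F_2]_n) : nat := #|[set j : 'I_n | c ord0 j != 0%R]|.

(* S is an information set: k coordinates whose columns in G are
   linearly independent (no nontrivial vanishing combination of them). *)
Definition info_set k n (G : 'M['F_2]_(k, n)) (S : {set 'I_n}) : Prop :=
  #|S| = k /\
  forall v : 'cV['F_2]_n, (forall j, j \notin S -> v j ord0 = 0%R) ->
    (G *m v = 0)%R -> v = 0%R.

Definition cis3 k n (G : 'M['F_2]_(k, n)) : Prop :=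
  exists S1 S2 S3 : {set 'I_n},
    [/\ [disjoint S1 & S2], [disjoint S1 & S3], [disjoint S2 & S3],
        S1 :|: S2 :|: S3 = setT &
        [/\ info_set G S1, info_set G S2 & info_set G S3]].

Definition min_dist_ge k n (G : 'M['F_2]_(k, n)) (d : R) : Prop :=
  forall u : 'rV['F_2]_k, u != 0%R -> Rle d (INR (wt (u *m G))).

(* The code generated by [I | A | B] with A, B invertible is 3-CIS, its three
   blocks being disjoint information sets; its codewords are (u, uA, uB).
   Since GL_k(F_2) acts transitively on nonzero rows, for random invertible
   A, B and fixed u <> 0 the pair (uA, uB) is uniform among pairs of nonzero
   rows, so the expected number of u <> 0 with wt u + wt uA + wt uB < 3 delta k
   is at most L / (2^k - 1)^2, where L counts the triples (u, y, z) of total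
   weight below 3 delta k. With rho = delta / (1 - delta) one has
   (1 + rho) rho^(-delta) = 2^H(delta), so a Chernoff-type estimate gives
   L rho^(3 delta k) <= (1 + rho)^(3k) < 2^k rho^(3 delta k) when
   H(delta) < 1/3; thus L < 2^k <= (2^k - 1)^2 and some pair (A, B) works. *)

From Stdlib Require Import Reals Lra.
From mathcomp Require Import all_boot all_order all_algebra Rstruct zify.
Set Implicit Arguments. Unset Strict Implicit. Unset Printing Implicit Defensive.
Import Order.TTheory GRing.Theory Num.Theory.
Local Open Scope ring_scope.

Section EntropyBound.
Local Open Scope R_scope.
Variable delta : R.
Hypotheses (delta_gt0 : 0 < delta) (delta_lt1 : delta < 1).
Let rho := delta / (1 - delta).

Lemma odds_gt0 : 0 < rho.
Proof. by apply: Rdiv_lt_0_compat; lra. Qed.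

Lemma Hbin_ln_odds : Hbin delta * ln 2 = ln (1 + rho) - delta * ln rho.
Proof.
have ln_rho : ln rho = ln delta - ln (1 - delta).
  by rewrite /rho /Rdiv ln_mult ?ln_Rinv; try apply: Rinv_0_lt_compat; lra.
have ln_1rho : ln (1 + rho) = - ln (1 - delta).
  by rewrite (_ : 1 + rho = / (1 - delta)) ?ln_Rinv /rho; try field; lra.
rewrite ln_rho ln_1rho /Hbin /log2; field.
by have := ln_lt_2; lra.
Qed.

Lemma pow_odds_lt k : Hbin delta < 1 / 3 -> (0 < k)%N ->
  (1 + rho) ^ (3 * k) < 2 ^ k * Rpower rho (3 * delta * INR k).
Proof.
move=> H_lt k_gt0.
have ln2_gt0 : 0 < ln 2 by have := ln_lt_2; lra.
have k_pos : 0 < INR k by apply: lt_0_INR; lia.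
rewrite -!Rpower_pow ?mult_INR; try lra; last by have := odds_gt0; lra.
rewrite /Rpower -exp_plus; apply: exp_increasing.
rewrite (_ : ln (1 + rho) = Hbin delta * ln 2 + delta * ln rho); last first.
  by rewrite Hbin_ln_odds; ring.
have : 0 < (1 / 3 - Hbin delta) * ln 2 * INR k.
  by apply: Rmult_lt_0_compat => //; apply: Rmult_lt_0_compat; lra.
simpl (INR 2); simpl (INR 3); nra.
Qed.

End EntropyBound.

Lemma wt_row_mx m n (a : 'rV['F_2]_m) (b : 'rV['F_2]_n) :
  wt (row_mx a b) = (wt a + wt b)%N.
Proof.
rewrite /wt -!sum1dep_card !(big_mkcond _ (fun _ => 1%N)) big_split_ord /=.
by congr (_ + _)%N; apply: eq_bigr => i _; rewrite ?row_mxEl ?row_mxEr.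
Qed.

Lemma sum_expr_wt (R : comNzRingType) n (r : R) :
  \sum_(y : 'rV['F_2]_n) r ^+ wt y = (1 + r) ^+ n.
Proof.
pose w (b : 'F_2) := if b != 0 then r else 1.
have wtE (y : 'rV['F_2]_n) : r ^+ wt y = \prod_j w (y ord0 j).
  by rewrite /wt -prodr_const big_mkcond; apply: eq_bigr => j _; rewrite inE.
pose row_of (f : {ffun 'I_n -> 'F_2}) : 'rV['F_2]_n := \row_j f j.
have row_of_bij : bijective row_of.
  exists (fun y : 'rV['F_2]_n => [ffun j => y ord0 j]) => [f | y].
    by apply/ffunP => j; rewrite ffunE mxE.
  by apply/rowP => j; rewrite mxE ffunE.
rewrite (reindex row_of) /=; last exact: onW_bij.
rewrite (eq_bigr (fun f : {ffun 'I_n -> 'F_2} => \prod_j w (f j))) => [|f _]; last first.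
  by rewrite wtE; apply: eq_bigr => j _; rewrite mxE.
rewrite -(bigA_distr_bigA (fun _ : 'I_n => w)) prodr_const card_ord.
congr (_ ^+ _); rewrite (bigD1 0) //= /w eqxx; congr (_ + _).
rewrite (eq_bigr (fun _ => r)) => [|b /negbTE -> //].
by rewrite sumr_const cardC1 card_Fp.
Qed.

Lemma sum_light_triples_mul_le (F : realFieldType) k (light : pred nat) (rho E : F) :
  0 <= rho -> (forall w, light w -> E <= rho ^+ w) ->
  (\sum_(u : 'rV['F_2]_k) \sum_(y : 'rV['F_2]_k) \sum_(z : 'rV['F_2]_k)
     light (wt u + wt y + wt z))%:R * E <= (1 + rho) ^+ (3 * k).
Proof.
move=> rho_ge0 light_le.
rewrite mulnC exprM -sum_expr_wt !exprS expr0 mulr1.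
rewrite natr_sum mulr_suml big_distrl /=; apply: ler_sum => u _.
rewrite natr_sum mulr_suml big_distrl big_distrr /=; apply: ler_sum => y _.
rewrite natr_sum mulr_suml !big_distrr /=; apply: ler_sum => z _.
rewrite mulrA -!exprD; case: (boolP (light _)) => [/light_le|_].
  by rewrite mul1r.
by rewrite mul0r exprn_ge0.
Qed.

Section LightTriples.
Local Open Scope R_scope.

Lemma Rle_Rpower_le1 x a b : 0 < x <= 1 -> a <= b -> Rpower x b <= Rpower x a.
Proof.
move=> x_bnd le_ab.
have ln_le0 : ln x <= 0.
  case: (Rle_lt_or_eq_dec _ _ (proj2 x_bnd)) => [x_lt1|->]; last by rewrite ln_1; lra.
  by rewrite -ln_1; apply: Rlt_le; apply: ln_increasing; lra.
rewrite /Rpower; case: (Rle_lt_or_eq_dec (b * ln x) (a * ln x)); first by nra.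
  by move=> lt; apply: Rlt_le; apply: exp_increasing.
by move=> ->; lra.
Qed.

Definition weight_below (t : R) : pred nat := fun w => (INR w < t)%O.

Lemma sum_light_triples_lt delta k : 0 <= delta <= 1 / 2 -> Hbin delta < 1 / 3 -> (0 < k)%N ->
  (\sum_(u : 'rV['F_2]_k) \sum_(y : 'rV['F_2]_k) \sum_(z : 'rV['F_2]_k)
     weight_below (3 * delta * INR k) (wt u + wt y + wt z) < 2 ^ k)%N.
Proof.
move=> [delta_ge0 delta_le] H_lt k_gt0.
case: (Rle_lt_or_eq_dec _ _ delta_ge0) => [delta_gt0|<-]; last first.
  rewrite big1 ?expn_gt0 // => u _; rewrite big1 // => y _; rewrite big1 // => z _.
  apply/eqP; rewrite eqb0; apply/negP => /RltP.
  by have := pos_INR (wt u + wt y + wt z); lra.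
set rho := delta / (1 - delta); set t := 3 * delta * INR k.
have rho_gt0 : 0 < rho by apply: odds_gt0; lra.
have rho_le1 : rho <= 1.
  have : rho * (1 - delta) = delta by rewrite /rho; field; lra.
  nra.
have E_gt0 : 0 < Rpower rho t by apply: exp_pos.
have light_le w : weight_below t w -> (Rpower rho t <= rho ^+ w)%O.
  move/RltP => w_lt; apply/RleP; rewrite -RpowE -Rpower_pow //.
  by apply: Rle_Rpower_le1; lra.
have odds_lt := pow_odds_lt delta_gt0 (ltac:(lra)) H_lt k_gt0.
rewrite !RpowE -/rho -/t in odds_lt.
have := le_lt_trans (sum_light_triples_mul_le k (ltW (introT RltP rho_gt0)) light_le)
  (introT RltP odds_lt).
rewrite ltr_pM2r; last exact/RltP.
by rewrite IZRposE INRE -natrX ltr_nat.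
Qed.

End LightTriples.

Lemma unitmx_row_transitive (F : fieldType) n (y y' : 'rV[F]_n) : y != 0 -> y' != 0 ->
  exists2 T, T \in unitmx & y *m T = y'.
Proof.
move=> y_neq0 y'_neq0.
have [i yi_neq0] : exists i, y ord0 i != 0.
  apply/existsP; apply: contraR y_neq0 => /existsPn yi0.
  by apply/eqP/rowP => i; rewrite mxE; apply/eqP/negPn.
pose c : 'cV[F]_n := (y ord0 i)^-1 *: delta_mx i ord0.
have yc : y *m c = 1.
  apply/rowP => j; rewrite (ord1 j) !mxE (bigD1 i) //= big1 => [|l /negbTE l_neq_i].
    by rewrite !mxE !eqxx mulr1 divff // addr0.
  by rewrite !mxE l_neq_i /= !mulr0.
have [T T_unit yT] : {T | T \in unitmx & y *m (c *m y') = y *m T}.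
  by apply: complete_unitmx; rewrite mulmxA yc mul1mx !rank_rV y_neq0 y'_neq0.
by exists T => //; rewrite -yT mulmxA yc mul1mx.
Qed.

Section UnitmxAveraging.
Variable k : nat.
Implicit Types (u y z : 'rV['F_2]_k) (A B : 'M['F_2]_k).

Definition unitmx_fiber u y := [set A : 'M['F_2]_k | (A \in unitmx) && (u *m A == y)].

Lemma card_unitmx_fiber_le u y y' : y != 0 -> y' != 0 ->
  (#|unitmx_fiber u y| <= #|unitmx_fiber u y'|)%N.
Proof.
move=> y_neq0 y'_neq0; have [T T_unit yT] := unitmx_row_transitive y_neq0 y'_neq0.
rewrite -(card_imset _ (can_inj (mulmxK T_unit))).
apply/subset_leq_card/subsetP => B /imsetP [A]; rewrite !inE => /andP [A_unit /eqP uA] ->.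
by rewrite unitmx_mul A_unit T_unit mulmxA uA yT /=.
Qed.

Lemma card_unitmx_fiber u y y' : y != 0 -> y' != 0 ->
  #|unitmx_fiber u y| = #|unitmx_fiber u y'|.
Proof. by move=> y_neq0 y'_neq0; apply/eqP; rewrite eqn_leq !card_unitmx_fiber_le. Qed.

Lemma sum_unitmx_mulmx u (f : 'rV['F_2]_k -> nat) : u != 0 ->
  (\sum_(A | A \in unitmx) f (u *m A) = #|unitmx_fiber u u| * \sum_(y | y != 0%R) f y)%N.
Proof.
move=> u_neq0.
rewrite (partition_big (fun A => u *m A) (fun y => y != 0)) => [|A A_unit]; last first.
  by apply: contra u_neq0 => /eqP uA0; rewrite -(mulmxK A_unit u) uA0 mul0mx.
rewrite big_distrr /=; apply: eq_bigr => y y_neq0.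
rewrite (eq_bigr (fun _ => 1 * f y)%N) => [|A /andP [_ /eqP ->]]; last by rewrite mul1n.
by rewrite -big_distrl sum1dep_card (card_unitmx_fiber _ y_neq0 u_neq0).
Qed.

Lemma card_row_neq0 : #|[set y : 'rV['F_2]_k | y != 0]| = (2 ^ k).-1.
Proof.
have -> : [set y : 'rV['F_2]_k | y != 0] = [set~ 0] by apply/setP => y; rewrite !inE.
by rewrite cardsC1 card_mx card_Fp // mul1n.
Qed.

Local Notation N := (2 ^ k).-1.
Local Notation g := #|[set A : 'M['F_2]_k | A \in unitmx]|.

Lemma sum_unitmx_mulmx_card u (f : 'rV['F_2]_k -> nat) : u != 0 ->
  (N * \sum_(A | A \in unitmx) f (u *m A) = g * \sum_(y | y != 0%R) f y)%N.
Proof.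
move=> u_neq0; have := sum_unitmx_mulmx (fun _ => 1%N) u_neq0.
rewrite !sum1dep_card sum_unitmx_mulmx // => ->.
by rewrite -card_row_neq0 mulnCA mulnA.
Qed.

Lemma sum_unitmx2_mulmx_card u (f : 'rV['F_2]_k -> 'rV['F_2]_k -> nat) : u != 0 ->
  (N ^ 2 * \sum_(A | A \in unitmx) \sum_(B | B \in unitmx) f (u *m A) (u *m B)
   = g ^ 2 * \sum_(y | y != 0%R) \sum_(z | z != 0%R) f y z)%N.
Proof.
move=> u_neq0; rewrite -mulnn -mulnA big_distrr /=.
under eq_bigr => A _ do rewrite (sum_unitmx_mulmx_card (f (u *m A)) u_neq0).
rewrite -big_distrr /= mulnCA.
by rewrite (sum_unitmx_mulmx_card (fun y => \sum_(z | z != 0%R) f y z)) // mulnA mulnn.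
Qed.

Lemma exists_unitmx_pair_avoiding (bad : 'rV['F_2]_k -> 'rV['F_2]_k -> 'rV['F_2]_k -> bool) :
  (\sum_u \sum_y \sum_z bad u y z < N ^ 2)%N ->
  exists A B, [/\ A \in unitmx, B \in unitmx & forall u, u != 0 -> ~~ bad u (u *m A) (u *m B)].
Proof.
move=> bad_lt.
have [/existsP [A /existsP [B /and3P [A_unit B_unit /forallP good]]] | /existsPn none] :=
  boolP [exists A, exists B, [&& A \in unitmx, B \in unitmx &
                               [forall u, (u != 0) ==> ~~ bad u (u *m A) (u *m B)]]].
  by exists A, B; split => // u; apply/implyP/good.
have g_gt0 : (0 < g)%N by apply/card_gt0P; exists 1%:M; rewrite inE unitmx1.
suff : (g ^ 2 * N ^ 2 <= g ^ 2 * \sum_(u | u != 0%R) \sum_(y | y != 0%R) \sum_(z | z != 0%R) bad u y z)%N.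
  rewrite leq_pmul2l ?expn_gt0 ?g_gt0 // => /leq_trans N2_le.
  move: bad_lt; rewrite ltnNge => /negP [].
  apply: N2_le; rewrite big_mkcond; apply: leq_sum => u _; case: ifP => // _.
  rewrite big_mkcond; apply: leq_sum => y _; case: ifP => // _.
  by rewrite big_mkcond; apply: leq_sum => z _; case: ifP.
have every_pair_bad : (g ^ 2 <= \sum_(A | A \in unitmx) \sum_(B | B \in unitmx)
                          \sum_(u | u != 0%R) bad u (u *m A) (u *m B))%N.
  have gE : g = (\sum_(A : 'M['F_2]_k | A \in unitmx) 1)%N by rewrite sum1dep_card.
  rewrite -mulnn {1}gE big_distrl /=; apply: leq_sum => A A_unit.
  rewrite mul1n gE; apply: leq_sum => B B_unit.
  move/existsPn: (none A) => /(_ B); rewrite A_unit B_unit /= => /forallPn [u].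
  by rewrite negb_imply negbK => /andP [u_neq0 bad_u]; rewrite (bigD1 u) //= bad_u.
rewrite mulnC big_distrr /=.
under eq_bigr => u u_neq0 do rewrite -(sum_unitmx2_mulmx_card (bad u) u_neq0).
rewrite -big_distrr /= leq_mul2l; apply/orP; right; apply: (leq_trans every_pair_bad).
rewrite [X in (_ <= X)%N]exchange_big /=; apply: leq_sum => A _.
by rewrite [X in (_ <= X)%N]exchange_big.
Qed.

End UnitmxAveraging.

Definition ord_range n a b : {set 'I_n} := [set j : 'I_n | a <= j < b]%N.

Lemma card_ord_range n a b : (b <= n)%N -> #|ord_range n a b| = (b - a)%N.
Proof.
move=> b_le_n.
rewrite -sum1dep_card -(big_ord_widen_cond _ (fun j => a <= j)%N (fun _ => 1%N) b_le_n).
by rewrite -[(b - a)%N]muln1 -sum_nat_const_nat big_geq_mkord.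
Qed.

Section ThreeBlockCode.
Variables (k : nat) (P Q R : 'M['F_2]_k).
Local Notation n := (k + (k + k))%N.
Implicit Types (u : 'rV['F_2]_k) (v : 'cV['F_2]_n).

Definition three_block_mx : 'M['F_2]_(k, n) := row_mx P (row_mx Q R).

Lemma wt_mul_three_block u :
  wt (u *m three_block_mx) = (wt (u *m P) + wt (u *m Q) + wt (u *m R))%N.
Proof. by rewrite /three_block_mx !mul_mx_row !wt_row_mx addnA. Qed.

Definition block1 v := usubmx v.
Definition block2 v := usubmx (dsubmx v).
Definition block3 v := dsubmx (dsubmx v).

Lemma three_block_mul v :
  three_block_mx *m v = P *m block1 v + Q *m block2 v + R *m block3 v.
Proof.
by rewrite -{1}(vsubmxK v) -(vsubmxK (dsubmx v)) /three_block_mx !mul_row_col addrA.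
Qed.

Lemma blocks_eq0 v : block1 v = 0 -> block2 v = 0 -> block3 v = 0 -> v = 0.
Proof.
rewrite /block1 /block2 /block3 => v1 v2 v3.
by rewrite -(vsubmxK v) -(vsubmxK (dsubmx v)) v1 v2 v3 !col_mx0.
Qed.

Lemma block1_eq0 v : (forall j : 'I_n, (j < k)%N -> v j ord0 = 0) -> block1 v = 0.
Proof. by move=> v0; apply/colP => i; rewrite !mxE v0 //= ltn_ord. Qed.

Lemma block2_eq0 v : (forall j : 'I_n, (k <= j < k + k)%N -> v j ord0 = 0) -> block2 v = 0.
Proof. by move=> v0; apply/colP => i; rewrite !mxE v0 //= leq_addr ltn_add2l ltn_ord. Qed.

Lemma block3_eq0 v : (forall j : 'I_n, (k + k <= j)%N -> v j ord0 = 0) -> block3 v = 0.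
Proof. by move=> v0; apply/colP => i; rewrite !mxE v0 //= addnA leq_addr. Qed.

Lemma rank_three_block : P \in unitmx -> \rank three_block_mx = k.
Proof.
move=> P_unit; apply/eqP; rewrite eqn_leq rank_leq_row /=.
apply: (@mulmx1_min_rank _ _ _ _ _ 1%:M (col_mx (invmx P) 0)).
by rewrite mul1mx /three_block_mx mul_row_col mulmxV // mulmx0 addr0.
Qed.

Hypotheses (P_unit : P \in unitmx) (Q_unit : Q \in unitmx) (R_unit : R \in unitmx).

Lemma cis3_three_block : cis3 three_block_mx.
Proof.
have card_range a b : (a + k = b)%N -> (b <= n)%N -> #|ord_range n a b| = k.
  by move=> <- b_le; rewrite card_ord_range // addKn.
exists (ord_range n 0 k), (ord_range n k (k + k)), (ord_range n (k + k) n).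
split; rewrite ?(disjoints_subset, setUA); try by apply/subsetP => j; rewrite !inE; lia.
  by apply/setP => j; rewrite !inE; have := ltn_ord j; lia.
split; split; try by apply: card_range; lia.
- move=> v v_supp.
  have v2 : block2 v = 0 by apply: block2_eq0 => j j_in; apply: v_supp; rewrite inE; lia.
  have v3 : block3 v = 0 by apply: block3_eq0 => j j_ge; apply: v_supp; rewrite inE; lia.
  rewrite three_block_mul v2 v3 !mulmx0 !addr0 => Pv.
  by apply: blocks_eq0; rewrite // -(mulKmx P_unit (block1 v)) Pv mulmx0.
- move=> v v_supp.
  have v1 : block1 v = 0 by apply: block1_eq0 => j j_lt; apply: v_supp; rewrite inE; lia.
  have v3 : block3 v = 0 by apply: block3_eq0 => j j_ge; apply: v_supp; rewrite inE; lia.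
  rewrite three_block_mul v1 v3 !mulmx0 add0r addr0 => Qv.
  by apply: blocks_eq0; rewrite // -(mulKmx Q_unit (block2 v)) Qv mulmx0.
- move=> v v_supp.
  have v1 : block1 v = 0 by apply: block1_eq0 => j j_lt; apply: v_supp; rewrite inE; lia.
  have v2 : block2 v = 0 by apply: block2_eq0 => j j_in; apply: v_supp; rewrite inE; lia.
  rewrite three_block_mul v1 v2 !mulmx0 !add0r => Rv.
  by apply: blocks_eq0; rewrite // -(mulKmx R_unit (block3 v)) Rv mulmx0.
Qed.

End ThreeBlockCode.

Theorem proposition3 (delta : R) :
  Rle 0 delta -> Rle delta (Rdiv 1 2) -> Rlt (Hbin delta) (Rdiv 1 3) ->
  exists K : nat, forall k : nat, (K <= k)%N ->
    exists G : 'M['F_2]_(k, 3 * k),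
      \rank G = k /\ cis3 G /\ min_dist_ge G (Rmult (Rmult 3 delta) (INR k)).
Proof.
move=> delta_ge0 delta_le H_lt; exists 2%N => k k_ge2.
have few_light := sum_light_triples_lt (conj delta_ge0 delta_le) H_lt (ltnW k_ge2).
have pow2_le : (2 ^ k <= (2 ^ k).-1 ^ 2)%N.
  have : (2 ^ 2 <= 2 ^ k)%N by rewrite leq_exp2l.
  move: (2 ^ k)%N => p; nia.
have [A [B [A_unit B_unit heavy]]] :=
  exists_unitmx_pair_avoiding (leq_trans few_light pow2_le).
rewrite (_ : (3 * k)%N = k + (k + k))%N; last by lia.
exists (three_block_mx 1%:M A B); split; first exact: rank_three_block (unitmx1 _ _).
split; first exact: cis3_three_block (unitmx1 _ _) A_unit B_unit.
move=> u u_neq0; rewrite wt_mul_three_block mulmx1.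
by apply: Rnot_lt_le => /RltP; apply/negP/heavy.
Qed.
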